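(* Fix $p\ge2$. There exist $W\in\mathbb{R}^{36p\times p}$ and $V\in\mathbb{R}^{p\times 36p}$ such that the ReLU network $s^\theta(x)=V\,\mathrm{ReLU}(Wx)$ of width $d=36p$ satisfies, for all $x\in\mathcal{X}_2$, \[ h_\theta(x)=y(x),\qquad s^\theta_{y(x)}(x)-\max_{q\ne y(x)}s^\theta_q(x)\ \ge\ \frac{25}{49}p+\frac{20}{49}, \] and $\|W\|_\infty\le1$, $\|V\|_\infty\le\frac{34}{7}$, $\|V\|_2\le 11\sqrt p$.
   Context: Let $[p]=\{0,\dots,p-1\}$ and $\mathcal{X}_2=\{x\in\{0,1,2\}^p:\|x\|_1=2\}$, coordinates indexed by $[p]$; $y(x)=(\sum_{r\in[p]}r\,x_r)\bmod p$. $\mathrm{ReLU}(t)=\max\{0,t\}$ entrywise. The predictor is $h_\theta(x)=\ell$ if $s^\theta_\ell(x)>s^\theta_k(x)$ for all $k\ne\ell$, and $\bot$ otherwise. For a matrix, $\|\cdot\|_\infty$ is the maximum absolute entry and $\|\cdot\|_2$ the spectral norm. *)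

From HB Require Import structures.
From mathcomp Require Import all_boot all_order all_algebra.
From mathcomp Require Import classical_sets reals.
Set Implicit Arguments. Unset Strict Implicit. Unset Printing Implicit Defensive.
Import Order.TTheory GRing.Theory Num.Theory.
Local Open Scope ring_scope.
Local Open Scope classical_set_scope.

Section Defs.
Variable R : realType.

Definition relu (m n : nat) (A : 'M[R]_(m, n)) : 'M[R]_(m, n) :=
  map_mx (fun t => Num.max 0 t) A.

Definition scores (p d : nat) (W : 'M[R]_(d, p)) (V : 'M[R]_(p, d))
  (x : 'cV[R]_p) : 'cV[R]_p := V *m relu (W *m x).

(* predictor: Some l if s_l > s_k for all k <> l, None (= bottom) otherwise *)
Definition predict (p : nat) (s : 'cV[R]_p) : option 'I_p :=
  [pick l | [forall k, (k != l) ==> (s k 0 < s l 0)]].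

Definition max_other (p : nat) (s : 'cV[R]_p) (l : 'I_p) : R :=
  sup [set s q 0 | q in [set q : 'I_p | q != l]].

Definition maxabs (m n : nat) (A : 'M[R]_(m, n)) : R :=
  \big[Num.max/0]_(i < m) \big[Num.max/0]_(j < n) `|A i j|.

Definition vnorm (n : nat) (x : 'cV[R]_n) : R :=
  Num.sqrt (\sum_(i < n) x i 0 ^+ 2).

Definition specnorm (m n : nat) (A : 'M[R]_(m, n)) : R :=
  sup [set vnorm (A *m x) | x in [set x : 'cV[R]_n | vnorm x <= 1]].

End Defs.

(* points of X_2 given by their coordinates c : [p] -> {0,1,2}, ||c||_1 = 2 *)
Definition inX2 (p : nat) (c : 'I_p -> nat) : Prop :=
  (forall r, c r <= 2)%N /\ (\sum_(r < p) c r = 2)%N.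

Definition embed (R : realType) (p : nat) (c : 'I_p -> nat) : 'cV[R]_p :=
  \col_(r < p) (c r)%:R.

Definition label (p : nat) (c : 'I_p -> nat) : nat :=
  ((\sum_(r < p) (r : nat) * c r) %% p)%N.

From HB Require Import structures.
From mathcomp Require Import all_boot all_order all_algebra.
From mathcomp Require Import classical_sets reals trigo.
From mathcomp Require Import ring lra zify.

Set Implicit Arguments.
Unset Strict Implicit.
Unset Printing Implicit Defensive.

Import Order.TTheory GRing.Theory Num.Theory.
Local Open Scope ring_scope.

(* For x = e_a + e_b the hidden layer has, for each frequency k < p, a block
   of 36 ReLUs of which 20 are used.  Writing y = 2 pi k a / p and
   z = 2 pi k b / p, ten of them compute cos (y + z) up to 1/8 from
     cos (y + z) = ((cos y + cos z)^2 - (sin y + sin z)^2 - cos 2y - cos 2z) / 2,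
   each square being replaced by the linear interpolant of s^2/2 at the
   integers of [-2, 2], a sum of four ReLUs.  Ten more do the same at y - pi/4,
   z - pi/4, i.e. compute sin (y + z).  Output weights cos and sin of
   2 pi k l / p combine the two into cos (2 pi k (a + b - l) / p) up to 1/4, and
   summing over k the score of l is (17/7) (p [l = a + b mod p] + e) with
   |e| <= p/4, so the margin is at least (17/7) p / 2.  The rows of V are
   orthogonal of squared norm (17/7)^2 (41/2) p <= 121 p, which bounds the
   spectral norm of V. *)

Lemma big_ord_mul_divmod (M : nmodType) m n (F : nat -> nat -> M) :
  \sum_(u < m * n) F (u %/ m)%N (u %% m)%N = \sum_(k < n) \sum_(j < m) F k j.
Proof.
rewrite -(big_mkord xpredT (fun u => F (u %/ m)%N (u %% m)%N)).
rewrite mulnC big_nat_mul big_mkord; apply: eq_bigr => k _.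
rewrite -{1}(add0n (k * m)%N) big_addn mulSn addnK big_mkord.
apply: eq_bigr => j _; have j_lt := ltn_ord j.
rewrite addnC divnMDl ?modnMDl ?divn_small ?modn_small ?addn0 //.
exact: leq_ltn_trans j_lt.
Qed.

Lemma count_mem_witness (T : finType) (f : T -> nat) :
  exists2 s : seq T, size s = (\sum_x f x)%N & forall x, f x = count_mem x s.
Proof.
exists (flatten [seq nseq (f y) y | y <- enum T]).
  rewrite size_flatten /shape -map_comp (eq_map (fun y => size_nseq (f y) y)).
  by rewrite sumnE big_map big_enum.
move=> x; rewrite count_flatten -map_comp sumnE big_map big_enum /=.
under eq_bigr do rewrite count_nseq.
by rewrite (bigD1 x) //= eqxx mul1n big1 ?addn0 // => y /negPf ->.
Qed.

Lemma dvdn_addB_mod p m l : (l < p)%N -> (p %| m + (p - l))%N = (m %% p == l)%N.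
Proof.
move=> l_lt; rewrite -{2}(modn_small l_lt) -(eqn_modDr (p - l)).
by rewrite subnKC ?modnn // ltnW.
Qed.

Section ReluGadget.
Variable R : realType.
Implicit Types (u v y g : R).

(* Four ReLUs fed with u and v; as a function of u + v this is the linear
   interpolant of s^2/2 at s = -2, -1, 0, 1, 2. *)
Definition halfsq_relu u v : R :=
  Num.max 0 (u / 2 + v / 2) + Num.max 0 (- u / 2 + - v / 2)
  + 2 * Num.max 0 ((u - 1 / 2) / 2 + (v - 1 / 2) / 2)
  + 2 * Num.max 0 ((- u - 1 / 2) / 2 + (- v - 1 / 2) / 2).

Lemma halfsq_relu_bound u v : -1 <= u <= 1 -> -1 <= v <= 1 ->
  0 <= halfsq_relu u v - (u + v) ^+ 2 / 2 <= 1 / 8.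
Proof.
move=> /andP[u_ge u_le] /andP[v_ge v_le].
have := sqr_ge0 (u + v + 3 / 2); have := sqr_ge0 (u + v + 1 / 2).
have := sqr_ge0 (u + v - 1 / 2); have := sqr_ge0 (u + v - 3 / 2).
rewrite /halfsq_relu !expr2.
case: (leP 0 (u / 2 + v / 2)); case: (leP 0 (- u / 2 + - v / 2));
  case: (leP 0 ((u - 1 / 2) / 2 + (v - 1 / 2) / 2));
  case: (leP 0 ((- u - 1 / 2) / 2 + (- v - 1 / 2) / 2));
  move=> *; apply/andP; split; nra.
Qed.

(* Neurons 0-3 and 4-7 are [halfsq_relu] on the cosines and on the sines;
   neurons 8 and 9 have nonnegative pre-activations, so they pass cos 2y
   linearly. *)
Definition gadget_in (t : nat) y : R :=
  match t with
  | 0 => cos y / 2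
  | 1 => - cos y / 2
  | 2 => (cos y - 1 / 2) / 2
  | 3 => (- cos y - 1 / 2) / 2
  | 4 => sin y / 2
  | 5 => - sin y / 2
  | 6 => (sin y - 1 / 2) / 2
  | 7 => (- sin y - 1 / 2) / 2
  | 8 => (1 + cos (y *+ 2)) / 2
  | 9 => (1 - cos (y *+ 2)) / 2
  | _ => 0
  end.

Definition gadget_out (t : nat) : R :=
  match t with
  | 0 | 1 => 1
  | 2 | 3 => 2
  | 4 | 5 => -1
  | 6 | 7 => -2
  | 8 => - (1 / 2)
  | 9 => 1 / 2
  | _ => 0
  end.

Lemma gadget_in_bound t y : `|gadget_in t y| <= 1.
Proof.
have := cos_geN1 y; have := cos_le1 y; have := sin_geN1 y; have := sin_le1 y.
have := cos_geN1 (y *+ 2); have := cos_le1 (y *+ 2); move=> *.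
do 10 (case: t => [|t]; first by rewrite /= ler_norml; apply/andP; split; lra).
by rewrite normr0.
Qed.

Lemma gadget_out_bound t : `|gadget_out t| <= 2.
Proof.
do 10 (case: t => [|t]; first by rewrite /= ler_norml; apply/andP; split; lra).
by rewrite normr0.
Qed.

Lemma gadget_out_sqr_sum : \sum_(0 <= t < 10) gadget_out t ^+ 2 = 41 / 2.
Proof. by rewrite !big_nat_recl // big_geq //=; field. Qed.

Definition cos_gadget y1 y2 : R :=
  \sum_(0 <= t < 10) gadget_out t * Num.max 0 (gadget_in t y1 + gadget_in t y2).

Lemma cos_gadgetE y1 y2 : cos_gadget y1 y2 =
  halfsq_relu (cos y1) (cos y2) - halfsq_relu (sin y1) (sin y2)
  - (cos (y1 *+ 2) + cos (y2 *+ 2)) / 2.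
Proof.
have := cos_geN1 (y1 *+ 2); have := cos_le1 (y1 *+ 2).
have := cos_geN1 (y2 *+ 2); have := cos_le1 (y2 *+ 2); move=> *.
rewrite /cos_gadget !big_nat_recl // big_geq //= /halfsq_relu.
rewrite [Num.max 0 ((1 + _) / 2 + _)]max_r ?[Num.max 0 ((1 - _) / 2 + _)]max_r;
  lra.
Qed.

Lemma cosD_sum_squares y1 y2 : cos (y1 + y2) =
  ((cos y1 + cos y2) ^+ 2 - (sin y1 + sin y2) ^+ 2
   - (cos (y1 *+ 2) + cos (y2 *+ 2))) / 2.
Proof.
have := cos2Dsin2 y1; have := cos2Dsin2 y2.
rewrite cosD !cos_mulr2n !expr2 => *; nra.
Qed.

Lemma cos_gadget_approx y1 y2 : `|cos_gadget y1 y2 - cos (y1 + y2)| <= 1 / 8.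
Proof.
have cos_bound y : -1 <= cos y <= 1 by rewrite -ler_norml cos_max.
have sin_bound y : -1 <= sin y <= 1 by rewrite -ler_norml sin_max.
have /andP[c_ge c_le] := halfsq_relu_bound (cos_bound y1) (cos_bound y2).
have /andP[s_ge s_le] := halfsq_relu_bound (sin_bound y1) (sin_bound y2).
rewrite cos_gadgetE cosD_sum_squares ler_norml; apply/andP; split; lra.
Qed.

Lemma rotated_gadget_approx y1 y2 g :
  `|cos g * cos_gadget y1 y2 + sin g * cos_gadget (y1 - pi / 4) (y2 - pi / 4)
    - cos (y1 + y2 - g)| <= 1 / 4.
Proof.
have sin_approx := cos_gadget_approx (y1 - pi / 4) (y2 - pi / 4).
rewrite (_ : y1 - pi / 4 + (y2 - pi / 4) = y1 + y2 - pi / 2) ?cosBpihalf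
  in sin_approx; last by field.
have -> : cos g * cos_gadget y1 y2 + sin g * cos_gadget (y1 - pi / 4) (y2 - pi / 4)
    - cos (y1 + y2 - g) = cos g * (cos_gadget y1 y2 - cos (y1 + y2))
    + sin g * (cos_gadget (y1 - pi / 4) (y2 - pi / 4) - sin (y1 + y2)).
  by rewrite cosB; ring.
have small (a e : R) : `|a| <= 1 -> `|e| <= 1 / 8 -> `|a| * `|e| <= 1 / 8.
  by move=> *; rewrite -[1 / 8]mul1r; apply: ler_pM.
apply: le_trans (ler_normD _ _) _; rewrite !normrM.
have := small _ _ (cos_max g) (cos_gadget_approx y1 y2).
have := small _ _ (sin_max g) sin_approx; lra.
Qed.

End ReluGadget.

Section Fourier.
Variable R : realType.

Lemma sin_mul_sum_cos (h : R) n :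
  sin h *+ 2 * \sum_(k < n) cos (k%:R * (h *+ 2)) =
  sin (n%:R * (h *+ 2) - h) + sin h.
Proof.
elim: n => [|n IHn]; first by rewrite big_ord0 mulr0 mul0r sub0r sinN addNr.
rewrite big_ord_recr /= mulrDr IHn -natr1.
set x := n%:R * (h *+ 2).
rewrite (_ : _ * (h *+ 2) - h = x + h); last by rewrite /x; ring.
by rewrite sinB sinD; ring.
Qed.

Definition phase (p k r : nat) : R := pi *+ 2 * (k%:R * r%:R) / p%:R.

Lemma phaseD p k a b : phase p k (a + b) = phase p k a + phase p k b.
Proof. by rewrite /phase natrD mulrDr mulrDr mulrDl. Qed.

Lemma cos_phase_mod p k N : (0 < p)%N ->
  cos (phase p k N) = cos (phase p k (N %% p)).
Proof.
move=> p_gt0; rewrite {1}(divn_eq N p) phaseD.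
have -> : phase p k (N %/ p * p) = (pi *+ 2) *+ (k * (N %/ p)).
  rewrite /phase -mulr_natr !natrM; field; by rewrite pnatr_eq0 -lt0n.
by rewrite addrC (periodicn (@cosD2pi R)).
Qed.

Lemma sum_cos_phase p N : (0 < p)%N ->
  \sum_(k < p) cos (phase p k N) = if (p %| N)%N then p%:R else 0.
Proof.
move=> p_gt0; under eq_bigr do rewrite cos_phase_mod //.
rewrite /dvdn; case: eqP => [-> | /eqP r_neq0].
  under eq_bigr do rewrite /phase mulr0 mulr0 mul0r cos0.
  by rewrite sumr_const card_ord.
set r := (N %% p)%N in r_neq0 *.
have r_lt : (r < p)%N by rewrite ltn_mod.
have p_pos : (0 : R) < p%:R by rewrite ltr0n.
set h : R := pi * r%:R / p%:R.
have sin_h_gt0 : 0 < sin h.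
  apply: sin_gt0_pi; apply/andP; split.
    by rewrite divr_gt0 // mulr_gt0 ?pi_gt0 // ltr0n lt0n.
  by rewrite ltr_pdivrMr // ltr_pM2l ?pi_gt0 // ltr_nat.
have phaseE k : phase p k r = k%:R * (h *+ 2).
  by rewrite /phase /h; field; rewrite gt_eqF.
under eq_bigr do rewrite phaseE.
have := sin_mul_sum_cos h p.
rewrite (_ : p%:R * (h *+ 2) - h = - h + (pi *+ 2) *+ r); last first.
  by rewrite /h -mulr_natr; field; rewrite gt_eqF.
rewrite (periodicn (@sinD2pi R)) sinN addNr.
by move/eqP; rewrite mulf_eq0 mulrn_eq0 /= (gt_eqF sin_h_gt0) => /eqP.
Qed.

Lemma cos_phaseB p k m l : (0 < p)%N -> (l <= p)%N ->
  cos (phase p k m - phase p k l) = cos (phase p k (m + (p - l))).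
Proof.
move=> p_gt0 l_le.
have -> : phase p k (m + (p - l)) = phase p k m - phase p k l + (pi *+ 2) *+ k.
  rewrite /phase -[_ *+ k]mulr_natr natrD natrB //; field.
  by rewrite pnatr_eq0 -lt0n.
by rewrite (periodicn (@cosD2pi R)).
Qed.

End Fourier.

Lemma sumsq_mx (R : pzSemiRingType) k (x : 'cV[R]_k) :
  \sum_i x i 0 ^+ 2 = (x^T *m x) 0 0.
Proof. by rewrite mxE; apply: eq_bigr => i _; rewrite !mxE expr2. Qed.

Section OrthogonalRows.
Variables (R : realType) (m n : nat) (V : 'M[R]_(m, n)) (lam : R).
Hypotheses (lam_gt0 : 0 < lam) (V_rows : V *m V^T = lam%:M).

Lemma sumsq_mul_le (x : 'cV[R]_n) :
  \sum_i (V *m x) i 0 ^+ 2 <= lam * \sum_i x i 0 ^+ 2.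
Proof.
(* Expand 0 <= |lam x - V^T V x|^2 = lam (lam |x|^2 - |V x|^2). *)
set y := V *m x; set w := V^T *m y.
have xw : x^T *m w = y^T *m y by rewrite /w /y mulmxA -trmx_mul.
have wx : w^T *m x = y^T *m y by rewrite -[x]trmxK -trmx_mul xw trmx_mul trmxK.
have ww : w^T *m w = lam *: (y^T *m y).
  rewrite /w trmx_mul trmxK mulmxA -(mulmxA y^T) V_rows.
  by rewrite mul_mx_scalar -scalemxAl.
have : 0 <= \sum_i (lam *: x - w) i 0 ^+ 2.
  by apply: sumr_ge0 => i _; exact: sqr_ge0.
rewrite !sumsq_mx [(_ - _)^T]linearB /= [(lam *: x)^T]linearZ /=.
rewrite !mulmxBl !mulmxBr -!scalemxAl -!scalemxAr xw wx ww.
by rewrite !mxE subrr subr0 -mulrBr pmulr_rge0 // subr_ge0.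
Qed.

Lemma specnorm_le_sqrt : specnorm V <= Num.sqrt lam.
Proof.
apply: ge_sup => [|_ [x x_le1 <-]].
  exists (vnorm (V *m 0)), 0 => //=.
  by rewrite /vnorm big1 ?sqrtr0 // => i _; rewrite mxE expr0n.
apply: ler_wsqrtr; apply: le_trans (sumsq_mul_le x) _.
move: x_le1; rewrite /= /vnorm -sqrtr1 ler_sqrt // => X_le1.
by rewrite -[leRHS]mulr1 ler_wpM2l // ltW.
Qed.

End OrthogonalRows.

Section Classifier.
Variables (R : realType) (p : nat).
Implicit Types (s : 'cV[R]_p) (l : 'I_p).

Lemma predictE s l : (forall q, q != l -> s q 0 < s l 0) -> predict s = Some l.
Proof.
move=> l_max; rewrite /predict; case: pickP => [x /forallP x_max | none].
  case: (eqVneq x l) => [-> // | x_neq_l].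
  have := x_max l; rewrite eq_sym x_neq_l /= => /lt_trans/(_ (l_max x x_neq_l)).
  by rewrite ltxx.
have /negP[] := none l; apply/forallP => q; apply/implyP; exact: l_max.
Qed.

Lemma max_other_le s l B : (1 < p)%N ->
  (forall q, q != l -> s q 0 <= B) -> max_other s l <= B.
Proof.
move=> p_gt1 le_B; apply: ge_sup => [|_ [q /= q_neq_l <-]]; last exact: le_B.
have /card_gt0P[q] : (0 < #|[set~ l]|)%N.
  by rewrite cardsC1 card_ord -ltnS prednK // ltnW.
by rewrite in_setC1 => q_neq_l; exists (s q 0), q.
Qed.

End Classifier.

Lemma maxabs_le (R : realType) m n (A : 'M[R]_(m, n)) B : 0 <= B ->
  (forall i j, `|A i j| <= B) -> maxabs A <= B.
Proof. by move=> B_ge0 A_le; apply: bigmax_le => // i _; apply: bigmax_le. Qed.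

Section PairInputs.
Variables (R : realType) (p : nat) (c : 'I_p -> nat).

Lemma inX2_pair :
  inX2 c -> exists a b : 'I_p, forall r, c r = ((a == r) + (b == r))%N.
Proof.
case=> _ sum_c; have [s] := count_mem_witness c; rewrite sum_c.
by case: s => [|a [|b []]] // _ cE; exists a, b => r; rewrite cE /= addn0.
Qed.

Variables (a b : 'I_p).
Hypothesis cE : forall r, c r = ((a == r) + (b == r))%N.

Lemma label_pair : label c = ((a + b) %% p)%N.
Proof.
rewrite /label; congr (_ %% _)%N.
under eq_bigr do rewrite cE mulnDr.
rewrite big_split /= [X in (X + _)%N](bigD1 a) // [X in (_ + X)%N](bigD1 b) //=.
have others (x : 'I_p) : (\sum_(i < p | i != x) i * (x == i) = 0)%N.
  by apply: big1 => i; rewrite eq_sym => /negPf ->; rewrite muln0.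
by rewrite !eqxx !muln1 !others !addn0.
Qed.

Lemma embed_pair : embed R c = delta_mx a 0 + delta_mx b 0.
Proof.
by apply/matrixP => r j; rewrite !mxE cE natrD ord1 !eqxx !andbT ![r == _]eq_sym.
Qed.

Lemma scores_pair d (W : 'M[R]_(d, p)) V l :
  scores W V (embed R c) l 0 = \sum_u V l u * Num.max 0 (W u a + W u b).
Proof.
rewrite /scores /relu embed_pair mulmxDr -!colE mxE.
by apply: eq_bigr => u _; rewrite !mxE.
Qed.

End PairInputs.

Section Network.
Variables (R : realType) (p : nat).
Hypothesis p_gt0 : (0 < p)%N.

(* 17/7 makes the margin (17/7) p / 2 exceed 25p/49 + 20/49 while keeping the
   entries of V below 2 (17/7) and (17/7)^2 (41/2) below 11^2. *)
Definition out_scale : R := 17 / 7.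

Lemma out_scale_gt0 : 0 < out_scale.
Proof. by rewrite /out_scale; lra. Qed.

Definition hidden_in (k j r : nat) : R :=
  if (j < 10)%N then gadget_in j (phase R p k r)
  else if (j < 20)%N then gadget_in (j - 10) (phase R p k r - pi / 4) else 0.

Definition hidden_out (l k j : nat) : R :=
  if (j < 10)%N then out_scale * gadget_out R j * cos (phase R p k l)
  else if (j < 20)%N then out_scale * gadget_out R (j - 10) * sin (phase R p k l)
  else 0.

Definition netW : 'M[R]_(36 * p, p) :=
  \matrix_(u, r) hidden_in (u %/ 36) (u %% 36) r.
Definition netV : 'M[R]_(p, 36 * p) :=
  \matrix_(l, u) hidden_out l (u %/ 36) (u %% 36).

Lemma block_outE l k (G : nat -> R) :
  \sum_(j < 36) hidden_out l k j * G j =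
  out_scale * (cos (phase R p k l) * \sum_(0 <= t < 10) gadget_out R t * G t
             + sin (phase R p k l) *
               \sum_(0 <= t < 10) gadget_out R t * G (t + 10)%N).
Proof.
rewrite -(big_mkord xpredT (fun j => hidden_out l k j * G j)).
rewrite (big_cat_nat _ (n := 20)) //= (big_cat_nat _ (n := 10)) //=.
rewrite [X in _ + X]big_nat_cond [X in _ + X]big1; last first.
  move=> j /andP[/andP[j_ge _] _].
  by rewrite /hidden_out ltnNge (leq_trans _ j_ge) // ltnNge j_ge mul0r.
rewrite addr0 (big_addn 0 20 10) mulrDr !mulr_sumr.
congr (_ + _); apply: eq_big_nat => t /andP[_ t_lt].
  by rewrite /hidden_out t_lt -!mulrA [gadget_out R t * _]mulrCA.
rewrite /hidden_out ltnNge leq_addl /=; have -> : (t + 10 < 20)%N by lia.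
by rewrite addnK -!mulrA [gadget_out R t * _]mulrCA.
Qed.

Lemma block_score l k a b :
  \sum_(j < 36) hidden_out l k j * Num.max 0 (hidden_in k j a + hidden_in k j b) =
  out_scale * (cos (phase R p k l) * cos_gadget (phase R p k a) (phase R p k b)
    + sin (phase R p k l) *
      cos_gadget (phase R p k a - pi / 4) (phase R p k b - pi / 4)).
Proof.
rewrite (block_outE _ _ (fun j => Num.max 0 (hidden_in k j a + hidden_in k j b))).
rewrite /cos_gadget; congr (_ * (_ * _ + _ * _)).
  by apply: eq_big_nat => t /andP[_ t_lt]; rewrite /hidden_in t_lt.
apply: eq_big_nat => t /andP[_ t_lt]; rewrite /hidden_in ltnNge leq_addl /=.
have -> : (t + 10 < 20)%N by lia.
by rewrite addnK.
Qed.

Lemma pair_score_approx (a b l : 'I_p) :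
  `|\sum_u netV l u * Num.max 0 (netW u a + netW u b)
    - out_scale * (if ((a + b) %% p == l)%N then p%:R else 0)|
  <= out_scale * p%:R / 4.
Proof.
under eq_bigr do rewrite !mxE.
rewrite (big_ord_mul_divmod _ _ (fun k j =>
  hidden_out l k j * Num.max 0 (hidden_in k j a + hidden_in k j b))).
rewrite -dvdn_addB_mod // -sum_cos_phase // mulr_sumr -sumrB.
apply: le_trans (ler_norm_sum _ _ _) _.
rewrite (_ : out_scale * p%:R / 4 = \sum_(k < p) out_scale * (1 / 4)); last first.
  by rewrite sumr_const card_ord -mulr_natr; field.
apply: ler_sum => k _.
rewrite block_score -(cos_phaseB _ _ _ p_gt0 (ltnW (ltn_ord l))) phaseD.
rewrite -mulrBr normrM ger0_norm ?(ltW out_scale_gt0) // ler_pM2l ?out_scale_gt0 //.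
exact: rotated_gadget_approx.
Qed.

Lemma netV_rows : netV *m netV^T = (out_scale ^+ 2 * (41 / 2) * p%:R)%:M.
Proof.
have block_gram l q k : \sum_(j < 36) hidden_out l k j * hidden_out q k j =
    out_scale ^+ 2 * (41 / 2) * cos (phase R p k l - phase R p k q).
  rewrite block_outE -gadget_out_sqr_sum cosB !mulr_sumr -big_split /=.
  rewrite mulr_sumr mulr_suml; apply: eq_big_nat => t /andP[_ t_lt].
  rewrite /hidden_out t_lt ltnNge leq_addl /=.
  have -> : (t + 10 < 20)%N by lia.
  by rewrite addnK; ring.
apply/matrixP => l q; rewrite !mxE.
under eq_bigr do rewrite !mxE.
rewrite (big_ord_mul_divmod _ _ (fun k j => hidden_out l k j * hidden_out q k j)).
under eq_bigr do rewrite block_gram (cos_phaseB _ _ _ p_gt0 (ltnW (ltn_ord q))).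
rewrite -mulr_sumr sum_cos_phase // dvdn_addB_mod // modn_small //.
by rewrite val_eqE; case: (l == q); rewrite ?mulr0.
Qed.

Lemma maxabs_netW : maxabs netW <= 1.
Proof.
apply: maxabs_le => // u r; rewrite mxE /hidden_in.
by case: ifP => _; last case: ifP => _; rewrite ?normr0 ?gadget_in_bound.
Qed.

Lemma maxabs_netV : maxabs netV <= 34 / 7.
Proof.
have entry_le (g c : R) : `|g| <= 2 -> `|c| <= 1 -> `|out_scale * g * c| <= 34 / 7.
  move=> g_le c_le; rewrite -mulrA normrM ger0_norm ?(ltW out_scale_gt0) // normrM.
  apply: le_trans (ler_wpM2l (ltW out_scale_gt0) (ler_pM _ _ g_le c_le)) _ => //.
  by rewrite /out_scale; lra.
apply: maxabs_le => [|l u]; first lra.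
rewrite mxE /hidden_out; case: ifP => _; last case: ifP => _.
- exact: entry_le (gadget_out_bound _ _) (cos_max _).
- exact: entry_le (gadget_out_bound _ _) (sin_max _).
- by rewrite normr0; lra.
Qed.

Lemma specnorm_netV : specnorm netV <= 11 * Num.sqrt p%:R.
Proof.
have lam_gt0 : 0 < out_scale ^+ 2 * (41 / 2) * p%:R.
  by apply: mulr_gt0; rewrite ?ltr0n // /out_scale; lra.
apply: le_trans (specnorm_le_sqrt lam_gt0 netV_rows) _.
rewrite -[11]ger0_norm // -sqrtr_sqr -sqrtrM ?sqr_ge0 //.
apply: ler_wsqrtr; have := ler0n R p; rewrite /out_scale !expr2; lra.
Qed.

Section PairScores.
Variables (c : 'I_p -> nat) (a b : 'I_p).
Hypothesis cE : forall r, c r = ((a == r) + (b == r))%N.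

Lemma score_label (l : 'I_p) : ((a + b) %% p = l)%N ->
  3 / 4 * (out_scale * p%:R) <= scores netW netV (embed R c) l 0.
Proof.
move=> /eqP ab_l; have := pair_score_approx a b l.
by rewrite (scores_pair cE) ab_l ler_norml => /andP[score_ge _]; lra.
Qed.

Lemma score_other (q : 'I_p) : ((a + b) %% p != q)%N ->
  scores netW netV (embed R c) q 0 <= out_scale * p%:R / 4.
Proof.
move=> /negPf ab_q; have := pair_score_approx a b q.
by rewrite (scores_pair cE) ab_q mulr0 subr0; apply: le_trans (ler_norm _).
Qed.

End PairScores.

End Network.

Theorem mainTheorem13 (R : realType) (p : nat) (hp : (2 <= p)%N) :
  exists (W : 'M[R]_(36 * p, p)) (V : 'M[R]_(p, 36 * p)),
    (forall c : 'I_p -> nat, inX2 c ->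
       exists l : 'I_p, (l : nat) = label c /\
         predict (scores W V (embed R c)) = Some l /\
         (scores W V (embed R c)) l 0 - max_other (scores W V (embed R c)) l
           >= (25%:R / 49%:R) * p%:R + 20%:R / 49%:R) /\
    maxabs W <= 1 /\
    maxabs V <= 34%:R / 7%:R /\
    specnorm V <= 11%:R * Num.sqrt (p%:R).
Proof.
have p_gt0 : (0 < p)%N by exact: ltnW.
exists (netW R p), (netV R p); split; last first.
  split; first exact: maxabs_netW.
  by split; [exact: maxabs_netV | exact: specnorm_netV].
move=> c /inX2_pair[a [b cE]].
pose l : 'I_p := Ordinal (ltn_pmod (a + b) p_gt0).
have s_l := score_label R p_gt0 cE (erefl (val l)).
have s_q q : q != l ->
    scores (netW R p) (netV R p) (embed R c) q 0 <= out_scale R * p%:R / 4.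
  move=> q_neq_l; apply: (score_other _ p_gt0 cE).
  by apply: contra q_neq_l => /eqP ab_q; apply/eqP/val_inj.
have p_ge2 : (2 : R) <= p%:R by rewrite ler_nat.
rewrite /out_scale in s_l s_q.
exists l; split; first by rewrite (label_pair cE).
split; first by apply: predictE => q /s_q; lra.
by have := max_other_le hp s_q; lra.
Qed.
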